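(* The Shrikhande graph has no quantum symmetry, i.e. $C(G_{aut}^+(\Gamma))$ is commutative for $\Gamma$ the Shrikhande graph. (In contrast, the $4\times4$ rook's graph $H(2,4)$, which is strongly regular with the same parameters $(16,6,2,2)$, has quantum symmetry.)
   Context: The Shrikhande graph is the Cayley graph of $\mathbb Z_4\times\mathbb Z_4$ with connection set $\{\pm(1,0),\pm(0,1),\pm(1,1)\}$; it is strongly regular with parameters $(16,6,2,2)$ (16 vertices, 6-regular, any two adjacent vertices have 2 common neighbors, any two non-adjacent distinct vertices have 2 common neighbors) and has clique number three. The $4\times4$ rook's graph $H(2,4)$ has vertex set $\{1,2,3,4\}^2$, two vertices adjacent iff they differ in exactly one coordinate. For a finite simple undirected graph $\Gamma=(V,E)$ with $V=\{1,\dots,n\}$, $C(G_{aut}^+(\Gamma))$ is the universal unital $C^*$-algebra generated by $u_{ij}$, $1\le i,j\le n$, with relations: (R1) $u_{ij}=u_{ij}^*=u_{ij}^2$; (R2) $\sum_{l} u_{il}=1=\sum_{l} u_{li}$ for all $i$; (R3) $u_{ij}u_{kl}=u_{kl}u_{ij}=0$ whenever exactly one of $(i,k)\in E$, $(j,l)\in E$ holds. $\Gamma$ has no quantum symmetry if this algebra is commutative, and has quantum symmetry otherwise. *)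

From Stdlib Require Import Reals List.
Import ListNotations.
Open Scope R_scope.

Definition C : Type := (R * R)%type.
Definition Cadd (a b : C) : C := (fst a + fst b, snd a + snd b).
Definition Cmul (a b : C) : C :=
  (fst a * fst b - snd a * snd b, fst a * snd b + snd a * fst b).
Definition Cconj (a : C) : C := (fst a, - snd a).
Definition Cone : C := (1, 0).
Definition Cmod (a : C) : R := sqrt (fst a * fst a + snd a * snd a).

Record CStarAlgebra := {
  car :> Type;
  cz : car; co : car;
  cadd : car -> car -> car; copp : car -> car;
  cmul : car -> car -> car;
  cscal : C -> car -> car;
  cstar : car -> car;
  cnorm : car -> R;
  cadd_assoc : forall x y z, cadd x (cadd y z) = cadd (cadd x y) z;
  cadd_comm : forall x y, cadd x y = cadd y x;
  cadd_0l : forall x, cadd cz x = x;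
  cadd_oppl : forall x, cadd (copp x) x = cz;
  cscal_addl : forall a b x, cscal (Cadd a b) x = cadd (cscal a x) (cscal b x);
  cscal_addr : forall a x y, cscal a (cadd x y) = cadd (cscal a x) (cscal a y);
  cscal_mul : forall a b x, cscal (Cmul a b) x = cscal a (cscal b x);
  cscal_1 : forall x, cscal Cone x = x;
  cmul_assoc : forall x y z, cmul x (cmul y z) = cmul (cmul x y) z;
  cmul_1l : forall x, cmul co x = x;
  cmul_1r : forall x, cmul x co = x;
  cmul_addl : forall x y z, cmul (cadd x y) z = cadd (cmul x z) (cmul y z);
  cmul_addr : forall x y z, cmul x (cadd y z) = cadd (cmul x y) (cmul x z);
  cscal_mull : forall a x y, cscal a (cmul x y) = cmul (cscal a x) y;
  cscal_mulr : forall a x y, cscal a (cmul x y) = cmul x (cscal a y);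
  cstar_invol : forall x, cstar (cstar x) = x;
  cstar_add : forall x y, cstar (cadd x y) = cadd (cstar x) (cstar y);
  cstar_mul : forall x y, cstar (cmul x y) = cmul (cstar y) (cstar x);
  cstar_scal : forall a x, cstar (cscal a x) = cscal (Cconj a) (cstar x);
  cnorm_eq0 : forall x, cnorm x = 0 <-> x = cz;
  cnorm_triangle : forall x y, cnorm (cadd x y) <= cnorm x + cnorm y;
  cnorm_scal : forall a x, cnorm (cscal a x) = Cmod a * cnorm x;
  cnorm_submult : forall x y, cnorm (cmul x y) <= cnorm x * cnorm y;
  cnorm_cstar : forall x, cnorm (cmul (cstar x) x) = cnorm x * cnorm x;
  ccomplete : forall s : nat -> car,
    (forall eps, 0 < eps -> exists N, forall m n, (N <= m)%nat -> (N <= n)%nat ->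
        cnorm (cadd (s m) (copp (s n))) < eps) ->
    exists l, forall eps, 0 < eps -> exists N, forall n, (N <= n)%nat ->
        cnorm (cadd (s n) (copp l)) < eps
}.

Arguments cz {_}. Arguments co {_}. Arguments cadd {_} _ _. Arguments copp {_} _.
Arguments cmul {_} _ _. Arguments cscal {_} _ _. Arguments cstar {_} _.
Arguments cnorm {_} _.

(* A graph is given by a vertex type V, an exhaustive duplicate-free list of
   vertices, and a boolean adjacency relation (symmetric, irreflexive). *)
Definition sumA {A : CStarAlgebra} {V : Type} (vs : list V) (f : V -> A) : A :=
  fold_right (fun v acc => cadd (f v) acc) cz vs.

(* The defining relations (R1)-(R3) of C(G_aut^+(Gamma)) realised in a
   C*-algebra A by a family u. *)
Definition magic_unitary_for {V : Type} (vs : list V) (adj : V -> V -> bool)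
    (A : CStarAlgebra) (u : V -> V -> A) : Prop :=
  (forall i j, u i j = cstar (u i j) /\ u i j = cmul (u i j) (u i j)) /\
  (forall i, sumA vs (fun l => u i l) = co /\ sumA vs (fun l => u l i) = co) /\
  (forall i j k l, xorb (adj i k) (adj j l) = true ->
      cmul (u i j) (u k l) = cz /\ cmul (u k l) (u i j) = cz).

(* Gamma has no quantum symmetry iff the universal C*-algebra C(G_aut^+(Gamma))
   is commutative, i.e. (by its universal property) iff in every C*-algebra, any
   family satisfying (R1)-(R3) consists of pairwise commuting elements. *)
Definition no_quantum_symmetry {V : Type} (vs : list V) (adj : V -> V -> bool) : Prop :=
  forall (A : CStarAlgebra) (u : V -> V -> A),
    magic_unitary_for vs adj A u ->
    forall i j k l, cmul (u i j) (u k l) = cmul (u k l) (u i j).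

Inductive Z4 := z0 | z1 | z2 | z3.

Definition z4_of_nat (n : nat) : Z4 :=
  match Nat.modulo n 4 with 0 => z0 | 1 => z1 | 2 => z2 | _ => z3 end.
Definition nat_of_z4 (a : Z4) : nat :=
  match a with z0 => 0 | z1 => 1 | z2 => 2 | z3 => 3 end.
Definition z4_add (a b : Z4) : Z4 := z4_of_nat (nat_of_z4 a + nat_of_z4 b).
Definition z4_opp (a : Z4) : Z4 := z4_of_nat (4 - nat_of_z4 a).
Definition z4_eqb (a b : Z4) : bool := Nat.eqb (nat_of_z4 a) (nat_of_z4 b).

Definition ShV : Type := (Z4 * Z4)%type.
Definition z4_all : list Z4 := [z0; z1; z2; z3].
Definition sh_vertices : list ShV := list_prod z4_all z4_all.

Definition sh_conn (d : ShV) : bool :=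
  match d with
  | (z1, z0) | (z3, z0) | (z0, z1) | (z0, z3) | (z1, z1) | (z3, z3) => true
  | _ => false
  end.

Definition sh_adj (x y : ShV) : bool :=
  sh_conn (z4_add (fst y) (z4_opp (fst x)), z4_add (snd y) (z4_opp (snd x))).

(* The magic unitary u of the Shrikhande graph has commuting entries for three
   reasons.

   First, u_ij u_kl = 0 unless (i, k) and (j, l) lie in the same orbital of the
   automorphism group.  For orbitals at different distances this is the
   classical argument with row and column sums; the two orbitals at distance 2
   are separated by an explicit integer identity between words in the u_ij.

   Second, composing u on both sides with automorphisms gives again a magic
   unitary, and the automorphism group is transitive on each orbital, so it
   suffices that u_00 commutes with u_rr for one representative pair (0, r) of
   each orbital.

   Third, for these three pairs the commutator is an integer combination of two
   kinds of relations: inserting a line sum  sum_b u_ab = 1  into a word, and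
   commuting u_p with a partial line sum S, which holds as soon as
   S u_p S = S u_p.  The combinations were found by computer search; they are
   checked by a normaliser that deletes repeated letters (the u_ij are
   projections) and words containing a product of two or three letters already
   known to vanish. *)

From Stdlib Require Import Reals List Lra Permutation FinFun Bool Lia.
From Stdlib Require Import Sorting.Mergesort Orders.
Import ListNotations.

Section CStarAlgebraFacts.
Variable A : CStarAlgebra.
Implicit Types x y z : A.

Local Infix "+" := cadd.
Local Infix "*" := cmul.

Lemma cadd_0r x : x + cz = x.
Proof. rewrite cadd_comm; apply cadd_0l. Qed.

Lemma cadd_oppr x : x + copp x = cz.
Proof. rewrite cadd_comm; apply cadd_oppl. Qed.

Lemma cadd_reg_l x y z : x + y = x + z -> y = z.
Proof.
  intros H; rewrite <- (cadd_0l _ y), <- (cadd_0l _ z), <- (cadd_oppl _ x).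
  now rewrite <- !cadd_assoc, H.
Qed.

Lemma cadd_idem_eq0 x : x + x = x -> x = cz.
Proof. intros H; apply (cadd_reg_l x); now rewrite H, cadd_0r. Qed.

Lemma cmul_0l x : cz * x = cz.
Proof. apply cadd_idem_eq0; now rewrite <- cmul_addl, cadd_0l. Qed.

Lemma cmul_0r x : x * cz = cz.
Proof. apply cadd_idem_eq0; now rewrite <- cmul_addr, cadd_0l. Qed.

Lemma cscal_0r a : cscal a (cz : A) = cz.
Proof. apply cadd_idem_eq0; now rewrite <- cscal_addr, cadd_0l. Qed.

Lemma cstar_0 : cstar (cz : A) = cz.
Proof. apply cadd_idem_eq0; now rewrite <- cstar_add, cadd_0l. Qed.

Lemma copp_unique x y : x + y = cz -> y = copp x.
Proof. intros H; apply (cadd_reg_l x); now rewrite H, cadd_oppr. Qed.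

Lemma copp_0 : copp (cz : A) = cz.
Proof. symmetry; apply copp_unique, cadd_0l. Qed.

Lemma copp_involutive x : copp (copp x) = x.
Proof. symmetry; apply copp_unique, cadd_oppl. Qed.

Lemma cadd_opp_eq0 x y : x + copp y = cz -> x = y.
Proof.
  intros H; rewrite <- (copp_involutive x), <- (copp_unique _ _ H).
  apply copp_involutive.
Qed.

Lemma copp_add x y : copp (x + y) = copp x + copp y.
Proof.
  symmetry; apply copp_unique.
  rewrite (cadd_comm _ (copp x)), cadd_assoc, <- (cadd_assoc _ x y).
  now rewrite cadd_oppr, cadd_0r, cadd_oppr.
Qed.

Lemma copp_mull x y : copp x * y = copp (x * y).
Proof. apply copp_unique; now rewrite <- cmul_addl, cadd_oppr, cmul_0l. Qed.

Lemma copp_mulr x y : x * copp y = copp (x * y).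
Proof. apply copp_unique; now rewrite <- cmul_addr, cadd_oppr, cmul_0r. Qed.

Lemma cstar_opp x : cstar (copp x) = copp (cstar x).
Proof. apply copp_unique; now rewrite <- cstar_add, cadd_oppr, cstar_0. Qed.

Lemma cstar_mul_self_eq0 x : cstar x * x = cz -> x = cz.
Proof.
  intros H; apply cnorm_eq0.
  assert (E := cnorm_cstar _ x); rewrite H, (proj2 (cnorm_eq0 _ _) eq_refl) in E.
  nra.
Qed.

Definition zmul (c : Z) x : A := cscal (IZR c, 0) x.

Lemma zmul_add c d x : zmul (c + d) x = zmul c x + zmul d x.
Proof.
  unfold zmul; rewrite <- cscal_addl; unfold Cadd; simpl.
  rewrite plus_IZR; do 2 f_equal; lra.
Qed.

Lemma zmul_mul c d x : zmul (c * d) x = zmul c (zmul d x).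
Proof.
  unfold zmul; rewrite <- cscal_mul; unfold Cmul; simpl.
  rewrite mult_IZR; do 2 f_equal; lra.
Qed.

Lemma zmul_1 x : zmul 1 x = x.
Proof. apply cscal_1. Qed.

Lemma zmul_0 x : zmul 0 x = cz.
Proof. apply cadd_idem_eq0; now rewrite <- zmul_add. Qed.

Lemma zmul_m1 x : zmul (-1) x = copp x.
Proof.
  apply copp_unique; rewrite <- (zmul_1 x) at 1.
  now rewrite <- zmul_add, zmul_0.
Qed.

Lemma zmul_0r c : zmul c cz = cz.
Proof. apply cscal_0r. Qed.

Lemma zmul_addr c x y : zmul c (x + y) = zmul c x + zmul c y.
Proof. apply cscal_addr. Qed.

Lemma zmul_eq0 c x : c <> 0%Z -> zmul c x = cz -> x = cz.
Proof.
  intros Hc H.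
  assert (Hc' : IZR c <> 0) by now apply not_0_IZR.
  rewrite <- (cscal_1 _ x), <- (cscal_0r (/ IZR c, 0)), <- H; unfold zmul.
  rewrite <- cscal_mul; unfold Cmul, Cone; simpl.
  f_equal; f_equal; [field | ring]; exact Hc'.
Qed.

Definition projection x : Prop := cstar x = x /\ x * x = x.

(* For projections p and s, X := s p - p s p satisfies X^* X = 0 as soon as
   s p s = s p; the C*-identity then gives s p = p s p, whose adjoint is p s. *)
Lemma projection_commute p s :
  projection p -> projection s -> s * (p * s) = s * p -> p * s = s * p.
Proof.
  intros [Pstar Pidem] [Sstar Sidem] Hcomp.
  assert (Hpsps : p * s * p * s * p = p * s * p).
  { replace (p * s * p * s * p) with (p * (s * (p * s)) * p)
      by now rewrite !cmul_assoc.
    now rewrite Hcomp, <- !cmul_assoc, Pidem, !cmul_assoc. }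
  set (X := s * p + copp (p * s * p)).
  assert (HX : cstar X * X = cz).
  { unfold X; rewrite cstar_add, cstar_opp, !cstar_mul, Sstar, Pstar, cmul_assoc.
    rewrite cmul_addl, !cmul_addr, !copp_mull, !copp_mulr, copp_involutive.
    replace (p * s * (s * p)) with (p * (s * s) * p) by now rewrite !cmul_assoc.
    replace (p * s * (p * s * p)) with (p * s * p * s * p) by now rewrite !cmul_assoc.
    replace (p * s * p * (s * p)) with (p * s * p * s * p) by now rewrite !cmul_assoc.
    replace (p * s * p * (p * s * p)) with (p * s * (p * p) * s * p)
      by now rewrite !cmul_assoc.
    rewrite Sidem, Pidem, Hpsps, !cadd_assoc, cadd_oppr, cadd_0l, cadd_oppl.
    reflexivity. }
  apply cstar_mul_self_eq0, cadd_opp_eq0 in HX.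
  assert (HX' := f_equal cstar HX).
  rewrite !cstar_mul, Sstar, Pstar, cmul_assoc in HX'.
  now rewrite HX', HX.
Qed.

End CStarAlgebraFacts.

Arguments sumA {_ _} _ _ : simpl never.

Section FiniteSums.
Variable A : CStarAlgebra.
Local Infix "+" := cadd.
Local Infix "*" := cmul.

Lemma sumA_cons {V} (v : V) l (f : V -> A) : sumA (v :: l) f = f v + sumA l f.
Proof. reflexivity. Qed.

Lemma sumA_app {V} (l1 l2 : list V) (f : V -> A) :
  sumA (l1 ++ l2) f = sumA l1 f + sumA l2 f.
Proof.
  induction l1 as [|v l1 IH]; simpl; [now rewrite cadd_0l|].
  now rewrite !sumA_cons, IH, cadd_assoc.
Qed.

Lemma sumA_map {V W} (g : V -> W) l (f : W -> A) :
  sumA (map g l) f = sumA l (fun v => f (g v)).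
Proof. induction l as [|v l IH]; [reflexivity|]; simpl; now rewrite !sumA_cons, IH. Qed.

Lemma sumA_ext {V} l (f g : V -> A) :
  (forall v, In v l -> f v = g v) -> sumA l f = sumA l g.
Proof.
  induction l as [|v l IH]; intros H; [reflexivity|].
  rewrite !sumA_cons, H, IH; [reflexivity| |left; reflexivity].
  intros; apply H; now right.
Qed.

Lemma sumA_eq0 {V} l (f : V -> A) : (forall v, In v l -> f v = cz) -> sumA l f = cz.
Proof.
  intros H; rewrite (sumA_ext l f (fun _ => cz)) by assumption; clear H.
  induction l as [|v l IH]; [reflexivity|].
  now rewrite sumA_cons, IH, cadd_0l.
Qed.

Lemma sumA_add {V} l (f g : V -> A) :
  sumA l (fun v => f v + g v) = sumA l f + sumA l g.
Proof.
  induction l as [|v l IH]; [simpl; now rewrite cadd_0l|].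
  rewrite !sumA_cons, IH, !cadd_assoc; f_equal.
  rewrite <- !cadd_assoc; f_equal; apply cadd_comm.
Qed.

Lemma sumA_mull {V} l (f : V -> A) x : x * sumA l f = sumA l (fun v => x * f v).
Proof.
  induction l as [|v l IH]; [apply cmul_0r|].
  now rewrite !sumA_cons, cmul_addr, IH.
Qed.

Lemma sumA_mulr {V} l (f : V -> A) x : sumA l f * x = sumA l (fun v => f v * x).
Proof.
  induction l as [|v l IH]; [apply cmul_0l|].
  now rewrite !sumA_cons, cmul_addl, IH.
Qed.

Lemma sumA_cstar {V} l (f : V -> A) : cstar (sumA l f) = sumA l (fun v => cstar (f v)).
Proof.
  induction l as [|v l IH]; [apply cstar_0|].
  now rewrite !sumA_cons, cstar_add, IH.
Qed.

Lemma sumA_opp {V} l (f : V -> A) : copp (sumA l f) = sumA l (fun v => copp (f v)).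
Proof.
  induction l as [|v l IH]; [apply copp_0|].
  now rewrite !sumA_cons, copp_add, IH.
Qed.

Lemma sumA_zmul {V} l (f : V -> A) c :
  zmul A c (sumA l f) = sumA l (fun v => zmul A c (f v)).
Proof.
  induction l as [|v l IH]; [apply zmul_0r|].
  now rewrite !sumA_cons, zmul_addr, IH.
Qed.

Lemma sumA_filter {V} (P : V -> bool) l (f : V -> A) :
  (forall v, In v l -> P v = false -> f v = cz) -> sumA l f = sumA (filter P l) f.
Proof.
  induction l as [|v l IH]; intros H; [reflexivity|]; cbn [filter].
  assert (IH' : sumA l f = sumA (filter P l) f)
    by (apply IH; intros; apply H; auto using in_cons).
  destruct (P v) eqn:E; rewrite !sumA_cons, IH'; [reflexivity|].
  now rewrite H, cadd_0l by (auto using in_eq).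
Qed.

Lemma sumA_single {V} l (f : V -> A) r :
  NoDup l -> In r l -> (forall v, In v l -> v <> r -> f v = cz) -> sumA l f = f r.
Proof.
  induction l as [|v l IH]; intros ND Hin H; [destruct Hin|].
  inversion ND as [|? ? Hv ND']; subst; rewrite sumA_cons.
  destruct Hin as [<-|Hin].
  - rewrite sumA_eq0, cadd_0r; [reflexivity|].
    intros w Hw; apply H; [now right|]; intros ->; contradiction.
  - rewrite H, cadd_0l; [now apply IH; auto using in_cons|now left|].
    intros ->; contradiction.
Qed.

Lemma sumA_perm {V} (l1 l2 : list V) (f : V -> A) :
  Permutation l1 l2 -> sumA l1 f = sumA l2 f.
Proof.
  induction 1 as [| |x y l|]; [reflexivity| now rewrite !sumA_cons; f_equal | |congruence].
  rewrite !sumA_cons, !cadd_assoc; f_equal; apply cadd_comm.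
Qed.

End FiniteSums.

Definition graph_automorphism {V : Type} (vs : list V) (adj : V -> V -> bool)
    (f : V -> V) : Prop :=
  Permutation (map f vs) vs /\ forall x y, adj (f x) (f y) = adj x y.

Section Automorphisms.
Variables (V : Type) (vs : list V) (adj : V -> V -> bool).

Lemma graph_automorphism_comp f g :
  graph_automorphism vs adj f -> graph_automorphism vs adj g ->
  graph_automorphism vs adj (fun x => f (g x)).
Proof.
  intros [Pf Af] [Pg Ag]; split; [|intros; now rewrite Af, Ag].
  rewrite <- map_map; eapply perm_trans; [apply Permutation_map, Pg|exact Pf].
Qed.

Lemma graph_automorphism_id : graph_automorphism vs adj (fun x => x).
Proof. split; [now rewrite map_id|reflexivity]. Qed.

Lemma graph_automorphism_iter f k :
  graph_automorphism vs adj f -> graph_automorphism vs adj (Nat.iter k f).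
Proof.
  intros Hf; induction k as [|k IH]; [apply graph_automorphism_id|].
  exact (graph_automorphism_comp _ _ Hf IH).
Qed.

Lemma graph_automorphism_of_inverse f g :
  NoDup vs -> (forall x, In x vs) -> (forall x, g (f x) = x) ->
  (forall x y, adj (f x) (f y) = adj x y) -> graph_automorphism vs adj f.
Proof.
  intros ND Hall Hgf Hadj; split; [|exact Hadj].
  apply Permutation_map_same_l; [|intros x _; apply Hall].
  apply Injective_map_NoDup; [|exact ND].
  intros x y E; now rewrite <- (Hgf x), E, Hgf.
Qed.

End Automorphisms.

Section MagicUnitaries.
Variables (V : Type) (vs : list V) (adj : V -> V -> bool).
Variables (A : CStarAlgebra) (u : V -> V -> A).
Hypothesis Hu : magic_unitary_for vs adj A u.

Lemma magic_unitary_comp f g :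
  graph_automorphism vs adj f -> graph_automorphism vs adj g ->
  magic_unitary_for vs adj A (fun x y => u (f x) (g y)).
Proof.
  destruct Hu as [H1 [H2 H3]]; intros [Pf Af] [Pg Ag]; split; [|split].
  - intros; apply H1.
  - intros i; split.
    + rewrite <- (sumA_map A g vs (fun l => u (f i) l)), (sumA_perm _ _ _ _ Pg).
      apply H2.
    + rewrite <- (sumA_map A f vs (fun l => u l (g i))), (sumA_perm _ _ _ _ Pf).
      apply H2.
  - intros i j k l H; apply H3; now rewrite Af, Ag.
Qed.

Local Infix "*" := cmul.

Lemma magic_projection i j : projection A (u i j).
Proof. destruct Hu as [H1 _]; split; symmetry; apply H1. Qed.

Lemma magic_row_sum i : sumA vs (fun l => u i l) = co.
Proof. apply Hu. Qed.

Lemma magic_col_sum i : sumA vs (fun l => u l i) = co.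
Proof. apply Hu. Qed.

Lemma magic_mul_eq0 i j k l : xorb (adj i k) (adj j l) = true -> u i j * u k l = cz.
Proof. apply Hu. Qed.

Lemma magic_row_orth i j l m : adj j m <> adj l m -> u i j * u i l = cz.
Proof.
  intros Hm; destruct Hu as [_ [_ H3]].
  rewrite <- (cmul_1r _ (u i j)), <- (magic_col_sum m), sumA_mull, sumA_mulr.
  apply sumA_eq0; intros k _.
  destruct (xorb (adj i k) (adj j m)) eqn:E.
  - now rewrite (proj1 (H3 _ _ _ _ E)), cmul_0l.
  - assert (E' : xorb (adj i k) (adj l m) = true)
      by (destruct (adj i k), (adj j m), (adj l m); simpl in *; congruence).
    now rewrite <- cmul_assoc, (proj2 (H3 _ _ _ _ E')), cmul_0r.
Qed.

Lemma magic_col_orth i j l m : adj j m <> adj l m -> u j i * u l i = cz.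
Proof.
  intros Hm; destruct Hu as [_ [_ H3]].
  rewrite <- (cmul_1r _ (u j i)), <- (magic_row_sum m), sumA_mull, sumA_mulr.
  apply sumA_eq0; intros k _.
  destruct (xorb (adj j m) (adj i k)) eqn:E.
  - now rewrite (proj1 (H3 _ _ _ _ E)), cmul_0l.
  - assert (E' : xorb (adj l m) (adj i k) = true)
      by (destruct (adj i k), (adj j m), (adj l m); simpl in *; congruence).
    now rewrite <- cmul_assoc, (proj2 (H3 _ _ _ _ E')), cmul_0r.
Qed.

End MagicUnitaries.

Local Open Scope nat_scope.

(* A letter (a, b) stands for the entry u_ab of a magic unitary, a word for the
   product of its letters and a zpoly for an integer combination of words. *)
Definition letter : Type := (nat * nat)%type.
Definition word : Type := list letter.
Definition zpoly : Type := list (Z * word).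

Definition letter_eq_dec (x y : letter) : {x = y} + {x <> y}.
Proof. decide equality; apply Nat.eq_dec. Defined.

Definition word_eq_dec : forall v w : word, {v = w} + {v <> w} :=
  list_eq_dec letter_eq_dec.

Definition letter_compare (x y : letter) : comparison :=
  match Nat.compare (fst x) (fst y) with
  | Eq => Nat.compare (snd x) (snd y)
  | c => c
  end.

Lemma letter_compare_antisym x y : letter_compare y x = CompOpp (letter_compare x y).
Proof.
  unfold letter_compare; rewrite (Nat.compare_antisym (fst x)).
  destruct (fst x ?= fst y); simpl; [apply Nat.compare_antisym|reflexivity..].
Qed.

Fixpoint word_leb (v w : word) : bool :=
  match v, w with
  | [], _ => true
  | _ :: _, [] => false
  | x :: v', y :: w' =>
      match letter_compare x y with
      | Lt => true
      | Gt => false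
      | Eq => word_leb v' w'
      end
  end.

Lemma word_leb_total v w : word_leb v w = true \/ word_leb w v = true.
Proof.
  revert w; induction v as [|x v IH]; intros [|y w]; simpl; auto.
  rewrite (letter_compare_antisym x y).
  destruct (letter_compare x y); simpl; auto.
Qed.

Module TermOrder <: TotalLeBool'.
  Definition t : Type := (Z * word)%type.
  Definition leb (s t : t) : bool := word_leb (snd s) (snd t).
  Lemma leb_total s t : leb s t = true \/ leb t s = true.
  Proof. apply word_leb_total. Qed.
End TermOrder.

Module TermSort := Sort TermOrder.

Fixpoint merge_adjacent (t : Z * word) (p : zpoly) : zpoly :=
  match p with
  | [] => [t]
  | t' :: p' =>
      if word_eq_dec (snd t) (snd t') then merge_adjacent ((fst t + fst t')%Z, snd t) p'
      else t :: merge_adjacent t' p'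
  end.

Definition collect (p : zpoly) : zpoly :=
  match p with [] => [] | t :: p' => merge_adjacent t p' end.

Fixpoint squash (w : word) : word :=
  match w with
  | x :: (y :: _) as w' => if letter_eq_dec x y then squash w' else x :: squash w'
  | _ => w
  end.

Fixpoint has_zero_pair (zp : letter -> letter -> bool) (w : word) : bool :=
  match w with
  | x :: (y :: _) as w' => zp x y || has_zero_pair zp w'
  | _ => false
  end.

Fixpoint has_zero_triple (z3 : letter -> letter -> letter -> bool) (w : word) : bool :=
  match w with
  | x :: (y :: z :: _) as w' => z3 x y z || has_zero_triple z3 w'
  | _ => false
  end.

Section Normalisation.
Variables (zp : letter -> letter -> bool) (z3 : letter -> letter -> letter -> bool).

Definition simp_word (w : word) : option word :=
  let w' := squash w in
  if has_zero_pair zp w' || has_zero_triple z3 w' then None else Some w'.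

Definition simp (p : zpoly) : zpoly :=
  flat_map (fun t => match simp_word (snd t) with Some w => [(fst t, w)] | None => [] end) p.

Definition zpoly_norm (p : zpoly) : zpoly :=
  filter (fun t => negb (Z.eqb (fst t) 0)) (collect (TermSort.sort (simp p))).

End Normalisation.

Definition zpoly_scale (c : Z) (p : zpoly) : zpoly :=
  map (fun t => ((c * fst t)%Z, snd t)) p.

Definition line_letter (col : bool) (a b : nat) : letter := if col then (b, a) else (a, b).

Inductive basic_relation :=
| InsertLine (w1 w2 : word) (col : bool) (a : nat)
| Commute (w1 : word) (p : letter) (col : bool) (a : nat) (bs : list nat) (w2 : word).

Definition relation_poly (n : nat) (r : basic_relation) : zpoly :=
  match r with
  | InsertLine w1 w2 col a =>
      (1%Z, w1 ++ w2) :: map (fun b => ((-1)%Z, w1 ++ line_letter col a b :: w2)) (seq 0 n)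
  | Commute w1 p col a bs w2 =>
      flat_map (fun b => [(1%Z, w1 ++ p :: line_letter col a b :: w2);
                          ((-1)%Z, w1 ++ line_letter col a b :: p :: w2)]) bs
  end.

Definition nat_list_eqb (l m : list nat) : bool :=
  if list_eq_dec Nat.eq_dec l m then true else false.

Definition relation_ok zp z3 (n : nat) (r : basic_relation) : bool :=
  match r with
  | InsertLine _ _ _ _ => true
  | Commute _ p col a bs _ =>
      nat_list_eqb bs (filter (fun b => existsb (Nat.eqb b) bs) (seq 0 n)) &&
      forallb (fun b => forallb (fun b' =>
          existsb (Nat.eqb b') bs ||
          match simp_word zp z3 [line_letter col a b; p; line_letter col a b'] with
          | None => true | Some _ => false end) (seq 0 n)) bs
  end.

Definition sandwich_witness zp (n : nat) (p q r : letter) (x y : nat) : bool :=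
  (y <? n) && (fst q <? n) &&
  forallb (fun y' => (y' =? y) || zp p (x, y') || zp (x, y') q) (seq 0 n) &&
  forallb (fun b => (b =? fst q) || zp (x, y) (b, snd q) || zp (b, snd q) r) (seq 0 n) &&
  zp (x, y) r.

Definition listed_sandwich zp (n : nat) (data : list (word * (nat * nat)))
    (p q r : letter) : bool :=
  existsb (fun e => if word_eq_dec (fst e) [p; q; r]
                    then sandwich_witness zp n p q r (fst (snd e)) (snd (snd e))
                    else false) data.

Definition check_cert zp z3 (n : nat) (target : zpoly)
    (cert : list (Z * basic_relation)) : bool :=
  forallb (fun cr => relation_ok zp z3 n (snd cr)) cert &&
  match zpoly_norm zp z3 (zpoly_scale (-1) target ++
          flat_map (fun cr => zpoly_scale (fst cr) (relation_poly n (snd cr))) cert) with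
  | [] => true
  | _ => false
  end.

Section CertificateSoundness.
Variables (A : CStarAlgebra) (n : nat) (U : letter -> A).
Local Infix "+" := cadd.
Local Infix "*" := cmul.

Hypothesis U_projection : forall x, projection A (U x).
Hypothesis line_sum : forall col a, sumA (seq 0 n) (fun b => U (line_letter col a b)) = co.
Hypothesis line_orth : forall col a b b', b < n -> b' < n -> b <> b' ->
  U (line_letter col a b) * U (line_letter col a b') = cz.

Definition word_eval (w : word) : A := fold_right (fun x acc => U x * acc) co w.
Definition zpoly_eval (p : zpoly) : A :=
  sumA p (fun t => zmul A (fst t) (word_eval (snd t))).

Lemma word_eval_app v w : word_eval (v ++ w) = word_eval v * word_eval w.
Proof.
  induction v as [|x v IH]; simpl; [now rewrite cmul_1l|].
  now rewrite IH, cmul_assoc.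
Qed.

Lemma zpoly_eval_nil : zpoly_eval [] = cz.
Proof. reflexivity. Qed.

Lemma zpoly_eval_cons c w p : zpoly_eval ((c, w) :: p) = zmul A c (word_eval w) + zpoly_eval p.
Proof. reflexivity. Qed.

Lemma zpoly_eval_app p q : zpoly_eval (p ++ q) = zpoly_eval p + zpoly_eval q.
Proof. apply sumA_app. Qed.

Lemma zpoly_eval_scale c p : zpoly_eval (zpoly_scale c p) = zmul A c (zpoly_eval p).
Proof.
  unfold zpoly_eval, zpoly_scale; rewrite sumA_map, sumA_zmul.
  apply sumA_ext; intros [d w] _; apply zmul_mul.
Qed.

Lemma zpoly_eval_merge_adjacent t p :
  zpoly_eval (merge_adjacent t p) = zpoly_eval (t :: p).
Proof.
  revert t; induction p as [|[d w'] p IH]; intros [c w]; [reflexivity|]; simpl.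
  destruct (word_eq_dec w w') as [<-|_].
  - now rewrite IH, !zpoly_eval_cons, zmul_add, cadd_assoc.
  - now rewrite zpoly_eval_cons, IH.
Qed.

Lemma zpoly_eval_collect p : zpoly_eval (collect p) = zpoly_eval p.
Proof. destruct p as [|t p]; [reflexivity|apply zpoly_eval_merge_adjacent]. Qed.

Lemma word_eval_squash w : word_eval (squash w) = word_eval w.
Proof.
  induction w as [|x w IH]; [reflexivity|]; destruct w as [|y w]; [reflexivity|].
  change (squash (x :: y :: w))
    with (if letter_eq_dec x y then squash (y :: w) else x :: squash (y :: w)).
  destruct (letter_eq_dec x y) as [<-|_].
  - rewrite IH; simpl; now rewrite cmul_assoc, (proj2 (U_projection x)).
  - change (word_eval (x :: squash (y :: w))) with (U x * word_eval (squash (y :: w))).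
    now rewrite IH.
Qed.

Section ZeroPatterns.
Variables (zp : letter -> letter -> bool) (z3 : letter -> letter -> letter -> bool).
Hypothesis zp_sound : forall x y, zp x y = true -> U x * U y = cz.
Hypothesis z3_sound : forall x y z, z3 x y z = true -> U x * (U y * U z) = cz.

Lemma has_zero_pair_eval w : has_zero_pair zp w = true -> word_eval w = cz.
Proof.
  induction w as [|x [|y w] IH]; try discriminate; cbn [has_zero_pair].
  intros [H|H]%orb_prop; simpl.
  - now rewrite cmul_assoc, zp_sound, cmul_0l.
  - simpl in IH; now rewrite IH, cmul_0r.
Qed.

Lemma has_zero_triple_eval w : has_zero_triple z3 w = true -> word_eval w = cz.
Proof.
  induction w as [|x [|y [|z w]] IH]; try discriminate; cbn [has_zero_triple].
  intros [H|H]%orb_prop; simpl.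
  - rewrite !cmul_assoc, <- (cmul_assoc _ (U x)), z3_sound; [apply cmul_0l|exact H].
  - simpl in IH; now rewrite IH, cmul_0r.
Qed.

Lemma simp_word_eval w :
  match simp_word zp z3 w with
  | Some w' => word_eval w' = word_eval w
  | None => word_eval w = cz
  end.
Proof.
  unfold simp_word; rewrite <- word_eval_squash.
  destruct (has_zero_pair zp (squash w)) eqn:E1;
    [now apply has_zero_pair_eval|].
  destruct (has_zero_triple z3 (squash w)) eqn:E2; [now apply has_zero_triple_eval|].
  reflexivity.
Qed.

Lemma zpoly_eval_simp p : zpoly_eval (simp zp z3 p) = zpoly_eval p.
Proof.
  induction p as [|[c w] p IH]; [reflexivity|]; unfold simp in *; cbn [flat_map].
  rewrite zpoly_eval_app, IH, zpoly_eval_cons; f_equal.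
  pose proof (simp_word_eval w) as S; cbn [snd fst].
  destruct (simp_word zp z3 w) as [w'|].
  - now rewrite zpoly_eval_cons, S, cadd_0r.
  - now rewrite S, zmul_0r.
Qed.

Lemma zpoly_eval_norm p : zpoly_eval (zpoly_norm zp z3 p) = zpoly_eval p.
Proof.
  unfold zpoly_norm, zpoly_eval at 1.
  rewrite <- sumA_filter.
  2:{ intros [c w] _ H; simpl in H; apply negb_false_iff, Z.eqb_eq in H; subst.
      apply zmul_0. }
  fold (zpoly_eval (collect (TermSort.sort (simp zp z3 p)))).
  rewrite zpoly_eval_collect; unfold zpoly_eval at 1.
  rewrite <- (sumA_perm _ _ _ _ (TermSort.Permuted_sort _)).
  apply zpoly_eval_simp.
Qed.

Lemma insert_line_eval w1 w2 col a :
  zpoly_eval (relation_poly n (InsertLine w1 w2 col a)) = cz.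
Proof.
  unfold relation_poly; rewrite zpoly_eval_cons, zmul_1.
  unfold zpoly_eval; rewrite sumA_map; cbn [fst snd].
  rewrite (sumA_ext _ _ _
    (fun b => copp (word_eval w1 * (U (line_letter col a b) * word_eval w2)))).
  2:{ intros b _; now rewrite zmul_m1, word_eval_app. }
  rewrite <- sumA_opp, <- sumA_mull, <- sumA_mulr, line_sum, cmul_1l, word_eval_app.
  apply cadd_oppr.
Qed.

Lemma line_projection col a bs : NoDup bs -> (forall b, In b bs -> b < n) ->
  projection A (sumA bs (fun b => U (line_letter col a b))).
Proof.
  intros ND Hlt; split.
  - rewrite sumA_cstar; apply sumA_ext; intros; apply U_projection.
  - rewrite sumA_mulr; apply sumA_ext; intros b Hb.
    rewrite sumA_mull, (sumA_single _ _ _ b ND Hb); [apply U_projection|].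
    intros b' Hb' Hne; apply line_orth; auto.
Qed.

(* [U p] commutes with the partial line sum [S] over [bs] once every
   [U (line b) * U p * U (line b')] with [b] in [bs] and [b'] outside vanishes:
   then [S * U p * S = S * U p], and [projection_commute] applies. *)
Lemma commute_ok_sound p col a bs :
  relation_ok zp z3 n (Commute [] p col a bs []) = true ->
  U p * sumA bs (fun b => U (line_letter col a b)) =
  sumA bs (fun b => U (line_letter col a b)) * U p.
Proof.
  cbn [relation_ok]; intros [Hbs Hout]%andb_prop.
  unfold nat_list_eqb in Hbs; destruct list_eq_dec as [Ebs|]; [clear Hbs|discriminate].
  set (S := sumA bs (fun b => U (line_letter col a b))).
  assert (Hlt : forall b, In b bs -> b < n).
  { intros b Hb; rewrite Ebs in Hb; apply filter_In in Hb as [Hb _].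
    apply in_seq in Hb; lia. }
  assert (ND : NoDup bs) by (rewrite Ebs; apply NoDup_filter, seq_NoDup).
  assert (Hzero : forall b b', In b bs -> In b' (seq 0 n) -> existsb (Nat.eqb b') bs = false ->
            U (line_letter col a b) * U p * U (line_letter col a b') = cz).
  { intros b b' Hb Hb' Hnot; rewrite forallb_forall in Hout.
    specialize (Hout b Hb); rewrite forallb_forall in Hout.
    specialize (Hout b' Hb'); rewrite Hnot in Hout.
    pose proof (simp_word_eval [line_letter col a b; p; line_letter col a b']) as S3.
    destruct simp_word; [discriminate|].
    simpl in S3; now rewrite cmul_1r, cmul_assoc in S3. }
  apply projection_commute; [apply U_projection|now apply line_projection|].
  unfold S at 1 3; rewrite !sumA_mulr; apply sumA_ext; intros b Hb; symmetry.
  rewrite <- (cmul_1r _ (_ * U p)), <- (line_sum col a), sumA_mull.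
  rewrite (sumA_filter _ (fun b' => existsb (Nat.eqb b') bs)) by eauto.
  rewrite <- Ebs; unfold S; rewrite !sumA_mull.
  apply sumA_ext; intros; symmetry; apply cmul_assoc.
Qed.

Lemma commute_eval w1 p col a bs w2 :
  relation_ok zp z3 n (Commute w1 p col a bs w2) = true ->
  zpoly_eval (relation_poly n (Commute w1 p col a bs w2)) = cz.
Proof.
  intros H; apply commute_ok_sound in H.
  set (L b := U (line_letter col a b)); fold L in H.
  transitivity (word_eval w1 * (U p * sumA bs L + copp (sumA bs L * U p)) * word_eval w2).
  2:{ now rewrite H, cadd_oppr, cmul_0r, cmul_0l. }
  rewrite (sumA_mull A bs L (U p)), (sumA_mulr A bs L (U p)), sumA_opp, <- sumA_add.
  rewrite sumA_mull, sumA_mulr.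
  clear H; unfold relation_poly; induction bs as [|b bs IH]; [reflexivity|].
  cbn [flat_map]; rewrite zpoly_eval_app, IH, sumA_cons; f_equal.
  rewrite !zpoly_eval_cons, zmul_1, zmul_m1, !word_eval_app; simpl.
  rewrite cadd_0r, cmul_addr, cmul_addl, copp_mulr, copp_mull.
  now rewrite !cmul_assoc.
Qed.

Lemma insert_line_single col a c w1 w2 : c < n ->
  (forall b, b < n -> b <> c -> w1 * U (line_letter col a b) * w2 = cz) ->
  w1 * w2 = w1 * U (line_letter col a c) * w2.
Proof.
  intros Hc H.
  rewrite <- (cmul_1r _ w1) at 1; rewrite <- (line_sum col a), sumA_mull, sumA_mulr.
  apply (sumA_single A _ (fun b => w1 * U (line_letter col a b) * w2) c);
    [apply seq_NoDup|apply in_seq; lia|].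
  intros b Hb%in_seq Hne; apply H; [lia|exact Hne].
Qed.

(* Sum the row of [x] between [p] and [q], then the column of [q] between
   [(x, y)] and [r]: if every term but one vanishes each time, [p q r] equals
   [p (x, y) q r = p (x, y) r = 0]. *)
Lemma sandwich_witness_sound p q r x y :
  sandwich_witness zp n p q r x y = true -> U p * (U q * U r) = cz.
Proof.
  destruct q as [k l]; unfold sandwich_witness; cbn [fst snd].
  intros [[[[Hy Hk]%andb_prop H1]%andb_prop H2]%andb_prop H3]%andb_prop.
  apply Nat.ltb_lt in Hy, Hk; rewrite forallb_forall in H1, H2.
  assert (Hpq : U p * U (k, l) = U p * U (x, y) * U (k, l)).
  { apply (insert_line_single false x y); [exact Hy|]; intros b Hb Hne.
    destruct (orb_prop _ _ (H1 b (proj2 (in_seq _ _ _) (conj (Nat.le_0_l b) Hb))))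
      as [[E|E]%orb_prop|E]; [apply Nat.eqb_eq in E; contradiction| |].
    - now rewrite zp_sound, cmul_0l.
    - now rewrite <- cmul_assoc, zp_sound, cmul_0r. }
  assert (Hxr : U (x, y) * U r = U (x, y) * U (k, l) * U r).
  { apply (insert_line_single true l k); [exact Hk|]; intros b Hb Hne.
    destruct (orb_prop _ _ (H2 b (proj2 (in_seq _ _ _) (conj (Nat.le_0_l b) Hb))))
      as [[E|E]%orb_prop|E]; [apply Nat.eqb_eq in E; contradiction| |].
    - now rewrite zp_sound, cmul_0l.
    - now rewrite <- cmul_assoc, zp_sound, cmul_0r. }
  rewrite <- cmul_assoc in Hxr.
  rewrite cmul_assoc, Hpq, <- !cmul_assoc, <- Hxr, (zp_sound _ _ H3).
  apply cmul_0r.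
Qed.

Lemma listed_sandwich_sound data p q r :
  listed_sandwich zp n data p q r = true -> U p * (U q * U r) = cz.
Proof.
  intros (e & _ & He)%existsb_exists; destruct word_eq_dec in He; [|discriminate].
  exact (sandwich_witness_sound _ _ _ _ _ He).
Qed.

Lemma relation_ok_eval r : relation_ok zp z3 n r = true -> zpoly_eval (relation_poly n r) = cz.
Proof.
  destruct r; intros H; [apply insert_line_eval|now apply commute_eval].
Qed.

Theorem check_cert_sound target cert :
  check_cert zp z3 n target cert = true -> zpoly_eval target = cz.
Proof.
  unfold check_cert; intros [Hok Hnorm]%andb_prop.
  destruct zpoly_norm eqn:E; [clear Hnorm|discriminate].
  apply (f_equal zpoly_eval) in E.
  rewrite zpoly_eval_norm, zpoly_eval_app, zpoly_eval_scale, zmul_m1 in E.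
  assert (Hcert : zpoly_eval (flat_map (fun cr => zpoly_scale (fst cr)
                    (relation_poly n (snd cr))) cert) = cz).
  { clear E; induction cert as [|[c r] cert IH]; [reflexivity|].
    simpl in Hok; apply andb_prop in Hok as [Hr Hok]; cbn [flat_map].
    rewrite zpoly_eval_app, IH, zpoly_eval_scale, relation_ok_eval, zmul_0r, cadd_0l;
      auto. }
  rewrite Hcert, cadd_0r in E.
  now rewrite <- (copp_involutive _ (zpoly_eval target)), E, copp_0.
Qed.

Corollary check_cert_word_eq0 c w cert :
  c <> 0%Z -> check_cert zp z3 n [(c, w)] cert = true -> word_eval w = cz.
Proof.
  intros Hc H; apply check_cert_sound in H.
  rewrite zpoly_eval_cons, zpoly_eval_nil, cadd_0r in H; now apply zmul_eq0 in H.
Qed.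

End ZeroPatterns.
End CertificateSoundness.

Definition sh_add (x y : ShV) : ShV := (z4_add (fst x) (fst y), z4_add (snd x) (snd y)).
Definition sh_opp (x : ShV) : ShV := (z4_opp (fst x), z4_opp (snd x)).
Definition sh_zero : ShV := (z0, z0).

Lemma sh_adj_difference x y : sh_adj x y = sh_conn (sh_add y (sh_opp x)).
Proof. reflexivity. Qed.

Definition ShV_eq_dec (x y : ShV) : {x = y} + {x <> y}.
Proof. decide equality; decide equality. Defined.

Definition ShV_eqb (x y : ShV) : bool := if ShV_eq_dec x y then true else false.

Lemma sh_vertices_complete x : In x sh_vertices.
Proof. destruct x as [a b]; apply in_prod; destruct a, b; simpl; tauto. Qed.

Lemma forallb_sh_vertices (P : ShV -> bool) :
  forallb P sh_vertices = true -> forall x, P x = true.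
Proof. rewrite forallb_forall; intros H x; apply H, sh_vertices_complete. Qed.

Definition sh_vertex (k : nat) : ShV := (z4_of_nat (k / 4), z4_of_nat k).
Definition sh_index (x : ShV) : nat := 4 * nat_of_z4 (fst x) + nat_of_z4 (snd x).

Lemma sh_vertices_map : sh_vertices = map sh_vertex (seq 0 16).
Proof. reflexivity. Qed.

Lemma sh_vertex_index x : sh_vertex (sh_index x) = x.
Proof. destruct x as [[] []]; reflexivity. Qed.

Lemma sh_index_vertex k : k < 16 -> sh_index (sh_vertex k) = k.
Proof. intros H; do 16 (destruct k as [|k]; [reflexivity|]); lia. Qed.

Lemma sh_vertices_NoDup : NoDup sh_vertices.
Proof.
  apply (NoDup_map_inv sh_index); rewrite sh_vertices_map, map_map.
  rewrite (map_ext_in _ (fun k => k)), map_id; [apply seq_NoDup|].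
  intros k Hk%in_seq; apply sh_index_vertex; lia.
Qed.

Lemma z4_add_translate a b s : z4_add (z4_add b s) (z4_opp (z4_add a s)) = z4_add b (z4_opp a).
Proof. destruct a, b, s; reflexivity. Qed.

Lemma z4_add_opp_cancel a s : z4_add (z4_add a s) (z4_opp s) = a.
Proof. destruct a, s; reflexivity. Qed.

Lemma z4_add_opp_add a s : z4_add (z4_add a (z4_opp s)) s = a.
Proof. destruct a, s; reflexivity. Qed.

Lemma sh_add_translate x y s : sh_add (sh_add y s) (sh_opp (sh_add x s)) = sh_add y (sh_opp x).
Proof. unfold sh_add, sh_opp; simpl; now rewrite !z4_add_translate. Qed.

Lemma sh_add_opp_cancel x s : sh_add (sh_add x s) (sh_opp s) = x.
Proof. destruct x; unfold sh_add, sh_opp; simpl; now rewrite !z4_add_opp_cancel. Qed.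

Lemma sh_add_opp_add x s : sh_add (sh_add x (sh_opp s)) s = x.
Proof. destruct x; unfold sh_add, sh_opp; simpl; now rewrite !z4_add_opp_add. Qed.

Lemma sh_add_zero_l x : sh_add sh_zero x = x.
Proof. destruct x as [[] []]; reflexivity. Qed.

Lemma sh_translate_automorphism s :
  graph_automorphism sh_vertices sh_adj (fun x => sh_add x s).
Proof.
  apply (graph_automorphism_of_inverse _ _ _ _ (fun x => sh_add x (sh_opp s)));
    [apply sh_vertices_NoDup|apply sh_vertices_complete|intros; apply sh_add_opp_cancel|].
  intros x y; now rewrite !sh_adj_difference, sh_add_translate.
Qed.

Definition sh_rotate (x : ShV) : ShV := (snd x, z4_add (snd x) (z4_opp (fst x))).
Definition sh_swap (x : ShV) : ShV := (snd x, fst x).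

Lemma sh_rotate_automorphism : graph_automorphism sh_vertices sh_adj sh_rotate.
Proof.
  apply (graph_automorphism_of_inverse _ _ _ _ (Nat.iter 5 sh_rotate));
    [apply sh_vertices_NoDup|apply sh_vertices_complete|now intros [[] []]|].
  intros [[] []] [[] []]; reflexivity.
Qed.

Lemma sh_swap_automorphism : graph_automorphism sh_vertices sh_adj sh_swap.
Proof.
  apply (graph_automorphism_of_inverse _ _ _ _ sh_swap);
    [apply sh_vertices_NoDup|apply sh_vertices_complete|now intros []|].
  intros [a b] [c d]; rewrite !sh_adj_difference; simpl.
  destruct (z4_add c (z4_opp a)), (z4_add d (z4_opp b)); reflexivity.
Qed.

(* The stabiliser of [sh_zero]: the dihedral group of order 12 permuting the
   three lines through the connection set. *)
Definition sh_stabiliser : list (ShV -> ShV) :=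
  flat_map (fun k => [Nat.iter k sh_rotate; fun x => Nat.iter k sh_rotate (sh_swap x)])
    (seq 0 6).

Lemma sh_stabiliser_automorphism f :
  In f sh_stabiliser -> graph_automorphism sh_vertices sh_adj f.
Proof.
  intros (k & _ & Hf)%in_flat_map; destruct Hf as [<-|[<-|[]]].
  - apply graph_automorphism_iter, sh_rotate_automorphism.
  - apply (graph_automorphism_comp _ _ _ (fun x => Nat.iter k sh_rotate x) sh_swap);
      [apply graph_automorphism_iter, sh_rotate_automorphism|apply sh_swap_automorphism].
Qed.

(* The automorphism group of the Shrikhande graph has rank 4.  Its orbitals are
   equality (0), adjacency (1), and the non-adjacent pairs whose two common
   neighbours are non-adjacent (2) or adjacent (3); as the graph is a Cayley
   graph, the orbital of (x, y) only depends on y - x.  The diameter is 2, so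
   [Nat.min 2] of the orbital is the distance. *)
Definition orbital_of_difference (d : ShV) : nat :=
  match d with
  | (z0, z0) => 0
  | (z1, z0) | (z3, z0) | (z0, z1) | (z0, z3) | (z1, z1) | (z3, z3) => 1
  | (z2, z0) | (z0, z2) | (z2, z2) => 2
  | _ => 3
  end.

Definition sh_orbital (x y : ShV) : nat := orbital_of_difference (sh_add y (sh_opp x)).

Definition orbital_rep (t : nat) : ShV :=
  match t with 0 => (z0, z0) | 1 => (z0, z1) | 2 => (z0, z2) | _ => (z1, z2) end.

Lemma sh_stabiliser_transitive d : exists f, In f sh_stabiliser /\
  f sh_zero = sh_zero /\ f (orbital_rep (orbital_of_difference d)) = d.
Proof.
  assert (H : forallb (fun d => existsb (fun f => ShV_eqb (f sh_zero) sh_zero &&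
                 ShV_eqb (f (orbital_rep (orbital_of_difference d))) d) sh_stabiliser)
                sh_vertices = true) by (vm_compute; reflexivity).
  apply (fun H => forallb_sh_vertices _ H d), existsb_exists in H as (f & Hf & E).
  exists f; split; [exact Hf|].
  unfold ShV_eqb in E; destruct ShV_eq_dec, ShV_eq_dec; easy.
Qed.

Lemma sh_orbital_transitive x y : exists f, graph_automorphism sh_vertices sh_adj f /\
  f sh_zero = x /\ f (orbital_rep (sh_orbital x y)) = y.
Proof.
  destruct (sh_stabiliser_transitive (sh_add y (sh_opp x))) as (f & Hf & E0 & Ed).
  exists (fun z => sh_add (f z) x); split; [|split].
  - exact (graph_automorphism_comp _ _ _ _ _ (sh_translate_automorphism x)
             (sh_stabiliser_automorphism f Hf)).
  - now rewrite E0, sh_add_zero_l.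
  - unfold sh_orbital; now rewrite Ed, sh_add_opp_add.
Qed.

Lemma sh_twin_free x y : x <> y -> exists m, sh_adj x m <> sh_adj y m.
Proof.
  intros Hxy.
  assert (H : forallb (fun x => forallb (fun y => ShV_eqb x y ||
                 existsb (fun m => xorb (sh_adj x m) (sh_adj y m)) sh_vertices) sh_vertices)
                sh_vertices = true) by (vm_compute; reflexivity).
  apply (fun H => forallb_sh_vertices _ H x), (fun H => forallb_sh_vertices _ H y) in H.
  unfold ShV_eqb in H; destruct ShV_eq_dec; [contradiction|].
  apply existsb_exists in H as (m & _ & Hm); exists m.
  destruct (sh_adj x m), (sh_adj y m); easy.
Qed.

Lemma sh_orbital_eq0 x y : sh_orbital x y = 0 -> y = x.
Proof.
  unfold sh_orbital; intros H; rewrite <- (sh_add_opp_add y x).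
  destruct (sh_add y (sh_opp x)) as [[] []]; try discriminate; apply sh_add_zero_l.
Qed.

Lemma sh_orbital_refl x : sh_orbital x x = 0.
Proof. destruct x as [[] []]; reflexivity. Qed.

Lemma sh_orbital_eq1 x y : (sh_orbital x y =? 1) = sh_adj x y.
Proof. unfold sh_orbital; rewrite sh_adj_difference; now destruct sh_add as [[] []]. Qed.

Lemma sh_orbital_sym x y : sh_orbital y x = sh_orbital x y.
Proof. destruct x as [[] []], y as [[] []]; reflexivity. Qed.

Definition letter_orbitals (x y : letter) : nat * nat :=
  (sh_orbital (sh_vertex (fst x)) (sh_vertex (fst y)),
   sh_orbital (sh_vertex (snd x)) (sh_vertex (snd y))).

Definition distance_mismatch (x y : letter) : bool :=
  let (s, t) := letter_orbitals x y in negb (Nat.min 2 s =? Nat.min 2 t).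

Definition orbital_mismatch (x y : letter) : bool :=
  let (s, t) := letter_orbitals x y in negb (s =? t).

Lemma sh_vertex_0 : sh_vertex 0 = sh_zero.
Proof. reflexivity. Qed.

Lemma sh_orbital_zero_l d : sh_orbital sh_zero d = orbital_of_difference d.
Proof. now destruct d as [[] []]. Qed.


Definition adjn (a b : nat) : bool := sh_adj (sh_vertex a) (sh_vertex b).

Definition common_neighbours (a b : nat) : list nat :=
  filter (fun c => adjn a c && adjn c b) (seq 0 16).

(* Found by computer search: row and column sums through the common neighbours
   of (0, k) and of (0, l) combine to a nonzero multiple of u_00 u_kl. *)
Definition orbital_mismatch_cert (k l : nat) : list (Z * basic_relation) :=
  let a := hd 0 (common_neighbours 0 k) in
  let adjacent_to b := filter (adjn b) (seq 0 16) in
  let eps := if orbital_of_difference (sh_vertex l) =? 3 then 1%Z else 0%Z in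
  flat_map (fun b => map (fun t => (1%Z, InsertLine [(0, 0); (a, t)] [(k, l)] true b))
                         (adjacent_to b)) (common_neighbours 0 l) ++
  flat_map (fun b => map (fun m => ((-1)%Z, InsertLine [(0, 0)] [(m, b); (k, l)] false a))
                         (adjacent_to a)) (common_neighbours 0 l) ++
  (eps, InsertLine [(0, 0)] [(k, l)] false a) ::
  map (fun m => ((-1)%Z, InsertLine [(0, 0)] [(k, l)] false m))
      (filter (adjn a) (common_neighbours 0 k)).

Definition orbital_mismatch_target (k l : nat) : zpoly :=
  [(if orbital_of_difference (sh_vertex l) =? 3 then 1%Z else (-1)%Z, [(0, 0); (k, l)])].

Lemma orbital_mismatch_certs_valid :
  forallb (fun d => forallb (fun e =>
    let k := sh_index d in let l := sh_index e in
    negb (orbital_mismatch (0, 0) (k, l)) || distance_mismatch (0, 0) (k, l) ||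
    check_cert distance_mismatch (fun _ _ _ => false) 16
      (orbital_mismatch_target k l) (orbital_mismatch_cert k l)) sh_vertices) sh_vertices
  = true.
Proof. vm_compute; reflexivity. Qed.

Section ShrikhandeMagicUnitary.
Variables (A : CStarAlgebra) (u : ShV -> ShV -> A).
Hypothesis Hu : magic_unitary_for sh_vertices sh_adj A u.
Local Infix "*" := cmul.

Lemma sh_distance_mismatch_eq0 i j k l :
  Nat.min 2 (sh_orbital i k) <> Nat.min 2 (sh_orbital j l) -> u i j * u k l = cz.
Proof.
  intros Hne.
  destruct (Nat.eq_dec (sh_orbital i k) 0) as [Hik|Hik].
  { apply sh_orbital_eq0 in Hik as ->.
    assert (Hjl : l <> j) by (intros ->; rewrite !sh_orbital_refl in Hne; contradiction).
    destruct (sh_twin_free j l) as [m Hm]; [congruence|].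
    exact (magic_row_orth _ _ _ _ _ Hu i j l m Hm). }
  destruct (Nat.eq_dec (sh_orbital j l) 0) as [Hjl|Hjl].
  { apply sh_orbital_eq0 in Hjl as ->.
    destruct (sh_twin_free i k) as [m Hm]; [intros ->; now rewrite sh_orbital_refl in Hik|].
    exact (magic_col_orth _ _ _ _ _ Hu j i k m Hm). }
  apply magic_mul_eq0 with (1 := Hu).
  rewrite <- !sh_orbital_eq1.
  destruct (sh_orbital i k) as [|[|s]], (sh_orbital j l) as [|[|t]]; simpl in *;
    try reflexivity; lia.
Qed.

Definition sh_letter (x : letter) : A := u (sh_vertex (fst x)) (sh_vertex (snd x)).

Lemma sh_letter_projection x : projection A (sh_letter x).
Proof. apply (magic_projection _ _ _ _ _ Hu). Qed.

Lemma sh_line_sum col a : sumA (seq 0 16) (fun b => sh_letter (line_letter col a b)) = co.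
Proof.
  unfold sh_letter; destruct col; cbn [line_letter fst snd].
  - rewrite <- (sumA_map A sh_vertex _ (fun y => u y (sh_vertex a))), <- sh_vertices_map.
    apply (magic_col_sum _ _ _ _ _ Hu).
  - rewrite <- (sumA_map A sh_vertex _ (fun y => u (sh_vertex a) y)), <- sh_vertices_map.
    apply (magic_row_sum _ _ _ _ _ Hu).
Qed.

Lemma sh_vertex_inj b b' : b < 16 -> b' < 16 -> b <> b' -> sh_vertex b <> sh_vertex b'.
Proof.
  intros Hb Hb' Hne E; apply Hne.
  now rewrite <- (sh_index_vertex b), E, sh_index_vertex.
Qed.

Lemma sh_line_orth col a b b' : b < 16 -> b' < 16 -> b <> b' ->
  sh_letter (line_letter col a b) * sh_letter (line_letter col a b') = cz.
Proof.
  intros Hb Hb' Hne; apply sh_distance_mismatch_eq0.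
  assert (E := sh_vertex_inj _ _ Hb Hb' Hne).
  destruct col; cbn [line_letter fst snd]; rewrite sh_orbital_refl;
    destruct (sh_orbital (sh_vertex b) (sh_vertex b')) eqn:Eo; try (simpl; lia);
    apply sh_orbital_eq0 in Eo; congruence.
Qed.

Lemma distance_mismatch_sound x y :
  distance_mismatch x y = true -> sh_letter x * sh_letter y = cz.
Proof.
  unfold distance_mismatch, letter_orbitals; intros H%negb_true_iff%Nat.eqb_neq.
  now apply sh_distance_mismatch_eq0.
Qed.

Lemma sh_orbital_mismatch_at_zero d e :
  orbital_of_difference d <> orbital_of_difference e -> u sh_zero sh_zero * u d e = cz.
Proof.
  intros Hne.
  assert (H := forallb_sh_vertices _ (forallb_sh_vertices _ orbital_mismatch_certs_valid d) e).
  cbv beta zeta in H.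
  assert (Edl : letter_orbitals (0, 0) (sh_index d, sh_index e) =
                (orbital_of_difference d, orbital_of_difference e)).
  { unfold letter_orbitals; cbn [fst snd]; now rewrite !sh_vertex_index, !sh_orbital_zero_l. }
  assert (Hmis : orbital_mismatch (0, 0) (sh_index d, sh_index e) = true).
  { unfold orbital_mismatch; rewrite Edl; now apply negb_true_iff, Nat.eqb_neq. }
  rewrite Hmis in H; cbn [negb orb] in H.
  apply orb_prop in H as [Hd|Hc].
  - rewrite <- (sh_vertex_index d), <- (sh_vertex_index e), <- sh_vertex_0.
    exact (distance_mismatch_sound (0, 0) (sh_index d, sh_index e) Hd).
  - apply (check_cert_word_eq0 A 16 sh_letter sh_letter_projection sh_line_sum sh_line_orth
             _ _ distance_mismatch_sound)
      in Hc; [|discriminate|now destruct (_ =? 3)].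
    unfold word_eval, fold_right, sh_letter in Hc; cbn [fst snd] in Hc.
    now rewrite sh_vertex_0, !sh_vertex_index, cmul_1r in Hc.
Qed.

End ShrikhandeMagicUnitary.

Lemma sh_orbital_mismatch_eq0 A u : magic_unitary_for sh_vertices sh_adj A u ->
  forall i j k l, sh_orbital i k <> sh_orbital j l -> cmul (u i j) (u k l) = cz.
Proof.
  intros Hu i j k l Hne.
  pose proof (magic_unitary_comp _ _ _ _ _ Hu _ _
                (sh_translate_automorphism i) (sh_translate_automorphism j)) as Hu'.
  pose proof (sh_orbital_mismatch_at_zero _ _ Hu' _ _ Hne) as H; cbv beta in H.
  now rewrite !sh_add_zero_l, !sh_add_opp_add in H.
Qed.

(* The vanishing products u_p u_q u_r used by the certificates below, each with
   its witness (x, y) for [sandwich_witness]. *)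
Definition sandwich_data : list (word * (nat * nat)) := [
  ([(0, 0); (1, 1); (0, 5)], (3, 3)); ([(0, 0); (1, 1); (0, 6)], (3, 3));
  ([(0, 0); (1, 1); (0, 12)], (3, 3)); ([(0, 0); (1, 1); (0, 13)], (3, 3));
  ([(0, 0); (1, 5); (0, 1)], (3, 15)); ([(0, 0); (1, 5); (0, 4)], (3, 15));
  ([(0, 0); (1, 5); (0, 6)], (3, 15)); ([(0, 0); (1, 5); (0, 9)], (3, 15));
  ([(0, 2); (1, 1); (0, 5)], (3, 3)); ([(0, 2); (1, 1); (0, 6)], (3, 3));
  ([(0, 2); (1, 1); (0, 12)], (3, 3)); ([(0, 2); (1, 1); (0, 13)], (3, 3));
  ([(0, 10); (1, 5); (0, 1)], (3, 15)); ([(0, 10); (1, 5); (0, 4)], (3, 15));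
  ([(0, 10); (1, 5); (0, 6)], (3, 15)); ([(0, 10); (1, 5); (0, 9)], (3, 15));
  ([(1, 1); (0, 0); (1, 4)], (2, 2)); ([(1, 1); (0, 0); (1, 5)], (2, 2));
  ([(1, 1); (0, 0); (1, 12)], (2, 2)); ([(1, 1); (0, 0); (1, 15)], (2, 2));
  ([(1, 1); (0, 2); (1, 6)], (2, 0)); ([(1, 1); (0, 2); (1, 7)], (2, 0));
  ([(1, 1); (0, 2); (1, 13)], (2, 0)); ([(1, 1); (0, 2); (1, 14)], (2, 0));
  ([(1, 3); (0, 0); (1, 4)], (2, 2)); ([(1, 3); (0, 0); (1, 5)], (2, 2));
  ([(1, 3); (0, 0); (1, 12)], (2, 2)); ([(1, 3); (0, 0); (1, 15)], (2, 2));
  ([(1, 3); (0, 2); (1, 6)], (2, 0)); ([(1, 3); (0, 2); (1, 7)], (2, 0));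
  ([(1, 3); (0, 2); (1, 13)], (2, 0)); ([(1, 3); (0, 2); (1, 14)], (2, 0));
  ([(1, 5); (0, 0); (1, 1)], (2, 10)); ([(1, 5); (0, 0); (1, 3)], (2, 10));
  ([(1, 5); (0, 0); (1, 4)], (2, 10)); ([(1, 5); (0, 0); (1, 12)], (2, 10));
  ([(1, 5); (0, 1); (1, 0)], (2, 9)); ([(1, 5); (0, 1); (1, 2)], (2, 9));
  ([(1, 5); (0, 1); (1, 6)], (2, 9)); ([(1, 5); (0, 1); (1, 12)], (2, 9));
  ([(1, 5); (0, 4); (1, 0)], (2, 6)); ([(1, 5); (0, 4); (1, 3)], (2, 6));
  ([(1, 5); (0, 4); (1, 8)], (2, 6)); ([(1, 5); (0, 4); (1, 9)], (2, 6));
  ([(1, 5); (0, 6); (1, 1)], (2, 4)); ([(1, 5); (0, 6); (1, 2)], (2, 4));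
  ([(1, 5); (0, 6); (1, 10)], (2, 4)); ([(1, 5); (0, 6); (1, 11)], (2, 4));
  ([(1, 5); (0, 9); (1, 4)], (2, 1)); ([(1, 5); (0, 9); (1, 8)], (2, 1));
  ([(1, 5); (0, 9); (1, 10)], (2, 1)); ([(1, 5); (0, 9); (1, 14)], (2, 1));
  ([(1, 5); (0, 10); (1, 6)], (2, 0)); ([(1, 5); (0, 10); (1, 9)], (2, 0));
  ([(1, 5); (0, 10); (1, 11)], (2, 0)); ([(1, 5); (0, 10); (1, 14)], (2, 0));
  ([(1, 7); (0, 4); (1, 0)], (2, 6)); ([(1, 7); (0, 4); (1, 3)], (2, 6));
  ([(1, 7); (0, 4); (1, 8)], (2, 6)); ([(1, 7); (0, 4); (1, 9)], (2, 6));
  ([(1, 7); (0, 6); (1, 1)], (2, 4)); ([(1, 7); (0, 6); (1, 2)], (2, 4));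
  ([(1, 7); (0, 6); (1, 10)], (2, 4)); ([(1, 7); (0, 6); (1, 11)], (2, 4));
  ([(1, 13); (0, 1); (1, 0)], (2, 9)); ([(1, 13); (0, 1); (1, 2)], (2, 9));
  ([(1, 13); (0, 1); (1, 6)], (2, 9)); ([(1, 13); (0, 1); (1, 12)], (2, 9));
  ([(1, 13); (0, 9); (1, 4)], (2, 1)); ([(1, 13); (0, 9); (1, 8)], (2, 1));
  ([(1, 13); (0, 9); (1, 10)], (2, 1)); ([(1, 13); (0, 9); (1, 14)], (2, 1));
  ([(1, 15); (0, 0); (1, 1)], (2, 10)); ([(1, 15); (0, 0); (1, 3)], (2, 10));
  ([(1, 15); (0, 0); (1, 4)], (2, 10)); ([(1, 15); (0, 0); (1, 12)], (2, 10));
  ([(1, 15); (0, 10); (1, 6)], (2, 0)); ([(1, 15); (0, 10); (1, 9)], (2, 0));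
  ([(1, 15); (0, 10); (1, 11)], (2, 0)); ([(1, 15); (0, 10); (1, 14)], (2, 0));
  ([(5, 0); (1, 1); (5, 5)], (9, 3)); ([(5, 0); (1, 1); (5, 6)], (9, 3));
  ([(5, 0); (1, 1); (5, 12)], (9, 3)); ([(5, 0); (1, 1); (5, 13)], (9, 3));
  ([(5, 0); (1, 5); (5, 1)], (9, 15)); ([(5, 0); (1, 5); (5, 4)], (9, 15));
  ([(5, 0); (1, 5); (5, 6)], (9, 15)); ([(5, 0); (1, 5); (5, 9)], (9, 15));
  ([(5, 1); (0, 0); (5, 4)], (10, 2)); ([(5, 1); (0, 0); (5, 5)], (10, 2));
  ([(5, 1); (0, 0); (5, 12)], (10, 2)); ([(5, 1); (0, 0); (5, 15)], (10, 2));
  ([(5, 1); (0, 2); (5, 6)], (10, 0)); ([(5, 1); (0, 2); (5, 7)], (10, 0));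
  ([(5, 1); (0, 2); (5, 13)], (10, 0)); ([(5, 1); (0, 2); (5, 14)], (10, 0));
  ([(5, 2); (1, 1); (5, 5)], (9, 3)); ([(5, 2); (1, 1); (5, 6)], (9, 3));
  ([(5, 2); (1, 1); (5, 12)], (9, 3)); ([(5, 2); (1, 1); (5, 13)], (9, 3));
  ([(5, 3); (0, 0); (5, 4)], (10, 2)); ([(5, 3); (0, 0); (5, 5)], (10, 2));
  ([(5, 3); (0, 0); (5, 12)], (10, 2)); ([(5, 3); (0, 0); (5, 15)], (10, 2));
  ([(5, 3); (0, 2); (5, 6)], (10, 0)); ([(5, 3); (0, 2); (5, 7)], (10, 0));
  ([(5, 3); (0, 2); (5, 13)], (10, 0)); ([(5, 3); (0, 2); (5, 14)], (10, 0));
  ([(5, 4); (0, 0); (5, 1)], (10, 8)); ([(5, 4); (0, 0); (5, 3)], (10, 8));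
  ([(5, 4); (0, 0); (5, 5)], (10, 8)); ([(5, 4); (0, 0); (5, 15)], (10, 8));
  ([(5, 10); (1, 5); (5, 1)], (9, 15)); ([(5, 10); (1, 5); (5, 4)], (9, 15));
  ([(5, 10); (1, 5); (5, 6)], (9, 15)); ([(5, 10); (1, 5); (5, 9)], (9, 15));
  ([(5, 12); (0, 0); (5, 1)], (10, 8)); ([(5, 12); (0, 0); (5, 3)], (10, 8));
  ([(5, 12); (0, 0); (5, 5)], (10, 8)); ([(5, 12); (0, 0); (5, 15)], (10, 8));
  ([(6, 1); (0, 10); (6, 4)], (8, 8)); ([(6, 1); (0, 10); (6, 7)], (8, 8));
  ([(6, 1); (0, 10); (6, 12)], (8, 8)); ([(6, 1); (0, 10); (6, 13)], (8, 8));
  ([(6, 1); (1, 5); (6, 0)], (11, 13)); ([(6, 1); (1, 5); (6, 4)], (11, 13));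
  ([(6, 1); (1, 5); (6, 6)], (11, 13)); ([(6, 1); (1, 5); (6, 10)], (11, 13));
  ([(6, 3); (0, 10); (6, 4)], (8, 8)); ([(6, 3); (0, 10); (6, 7)], (8, 8));
  ([(6, 3); (0, 10); (6, 12)], (8, 8)); ([(6, 3); (0, 10); (6, 13)], (8, 8));
  ([(6, 4); (0, 10); (6, 1)], (8, 2)); ([(6, 4); (0, 10); (6, 3)], (8, 2));
  ([(6, 4); (0, 10); (6, 7)], (8, 2)); ([(6, 4); (0, 10); (6, 13)], (8, 2));
  ([(6, 5); (1, 1); (6, 0)], (11, 9)); ([(6, 5); (1, 1); (6, 2)], (11, 9));
  ([(6, 5); (1, 1); (6, 6)], (11, 9)); ([(6, 5); (1, 1); (6, 12)], (11, 9));
  ([(6, 6); (0, 0); (6, 7)], (8, 8)); ([(6, 6); (0, 0); (6, 9)], (8, 8));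
  ([(6, 6); (0, 0); (6, 11)], (8, 8)); ([(6, 6); (0, 0); (6, 13)], (8, 8));
  ([(6, 7); (0, 0); (6, 6)], (8, 10)); ([(6, 7); (0, 0); (6, 9)], (8, 10));
  ([(6, 7); (0, 0); (6, 11)], (8, 10)); ([(6, 7); (0, 0); (6, 14)], (8, 10));
  ([(6, 9); (1, 5); (6, 0)], (11, 13)); ([(6, 9); (1, 5); (6, 4)], (11, 13));
  ([(6, 9); (1, 5); (6, 6)], (11, 13)); ([(6, 9); (1, 5); (6, 10)], (11, 13));
  ([(6, 12); (0, 10); (6, 1)], (8, 2)); ([(6, 12); (0, 10); (6, 3)], (8, 2));
  ([(6, 12); (0, 10); (6, 7)], (8, 2)); ([(6, 12); (0, 10); (6, 13)], (8, 2));
  ([(6, 13); (0, 0); (6, 6)], (8, 10)); ([(6, 13); (0, 0); (6, 9)], (8, 10));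
  ([(6, 13); (0, 0); (6, 11)], (8, 10)); ([(6, 13); (0, 0); (6, 14)], (8, 10));
  ([(6, 13); (1, 1); (6, 0)], (11, 9)); ([(6, 13); (1, 1); (6, 2)], (11, 9));
  ([(6, 13); (1, 1); (6, 6)], (11, 9)); ([(6, 13); (1, 1); (6, 12)], (11, 9));
  ([(6, 14); (0, 0); (6, 7)], (8, 8)); ([(6, 14); (0, 0); (6, 9)], (8, 8));
  ([(6, 14); (0, 0); (6, 11)], (8, 8)); ([(6, 14); (0, 0); (6, 13)], (8, 8))].
Definition rep_commute_target (k : nat) : zpoly :=
  [(1%Z, [(0, 0); (k, k)]); ((-1)%Z, [(k, k); (0, 0)])].

(* Found by computer search: certificates for the commutator of u_00 and u_kk,
   for k = 1, 2, 6, i.e. the vertices (0, 1), (0, 2), (1, 2) representing the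
   orbitals 1, 2, 3. *)
Definition rep_commute_cert_1 : list (Z * basic_relation) := [
  (1%Z, InsertLine [(0, 0); (1, 1)] [] false 0);
  (1%Z, InsertLine [(0, 2); (1, 1)] [] false 0);
  ((-1)%Z, InsertLine [(0, 2); (1, 1)] [] false 5);
  ((-1)%Z, InsertLine [] [(1, 1); (0, 0)] false 0);
  ((-1)%Z, InsertLine [] [(1, 1); (0, 2)] false 0);
  (1%Z, InsertLine [(1, 1); (0, 2)] [] false 5);
  (1%Z, Commute [(0, 5)] (0, 0) false 1 [1; 3] []);
  (1%Z, Commute [(0, 6)] (0, 0) false 1 [1; 3] []);
  (1%Z, Commute [(0, 12)] (0, 0) false 1 [1; 3] []);
  (1%Z, Commute [(0, 13)] (0, 0) false 1 [1; 3] []);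
  (1%Z, Commute [] (0, 0) false 1 [1; 3] [(0, 5)]);
  (1%Z, Commute [] (0, 0) false 1 [1; 3] [(0, 6)]);
  (1%Z, Commute [] (0, 0) false 1 [1; 3] [(0, 12)]);
  (1%Z, Commute [] (0, 0) false 1 [1; 3] [(0, 13)]);
  (1%Z, Commute [] (0, 0) false 1 [1; 3] [(5, 6)]);
  (1%Z, Commute [] (0, 0) false 1 [1; 3] [(5, 13)]);
  (1%Z, Commute [(0, 5)] (0, 2) false 1 [1; 3] []);
  (1%Z, Commute [(0, 6)] (0, 2) false 1 [1; 3] []);
  (1%Z, Commute [(0, 12)] (0, 2) false 1 [1; 3] []);
  (1%Z, Commute [(0, 13)] (0, 2) false 1 [1; 3] []);
  (1%Z, Commute [] (0, 2) false 1 [1; 3] [(0, 5)]);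
  (1%Z, Commute [] (0, 2) false 1 [1; 3] [(0, 6)]);
  (1%Z, Commute [] (0, 2) false 1 [1; 3] [(0, 12)]);
  (1%Z, Commute [] (0, 2) false 1 [1; 3] [(0, 13)]);
  ((-1)%Z, Commute [] (0, 2) false 1 [1; 3] [(5, 5)]);
  ((-1)%Z, Commute [] (0, 2) false 1 [1; 3] [(5, 12)]);
  (1%Z, Commute [(1, 1)] (0, 2) false 5 [1; 3] []);
  (1%Z, Commute [] (1, 1) false 0 [0; 2] [(5, 0)]);
  (1%Z, Commute [] (1, 1) false 0 [0; 2] [(5, 2)]);
  (1%Z, Commute [] (1, 1) false 0 [0; 2] [(5, 6)]);
  (1%Z, Commute [] (1, 1) false 0 [0; 2] [(5, 7)]);
  (1%Z, Commute [] (1, 1) false 0 [0; 2] [(5, 13)]);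
  (1%Z, Commute [] (1, 1) false 0 [0; 2] [(5, 14)]);
  (1%Z, Commute [(0, 0)] (1, 1) false 5 [0; 2] [])].
Definition rep_commute_cert_2 : list (Z * basic_relation) := [
  (1%Z, InsertLine [] [(0, 0); (1, 1)] false 2);
  (1%Z, InsertLine [] [(0, 0); (1, 3)] false 2);
  (1%Z, InsertLine [(0, 0)] [(2, 2)] false 1);
  ((-1)%Z, InsertLine [(1, 1); (0, 0)] [] false 2);
  ((-1)%Z, InsertLine [(1, 3); (0, 0)] [] false 2);
  ((-1)%Z, InsertLine [(2, 2)] [(0, 0)] false 1);
  ((-1)%Z, Commute [] (0, 0) false 1 [1; 3] []);
  (1%Z, Commute [(2, 2)] (0, 0) false 1 [1; 3] []);
  (1%Z, Commute [(2, 8)] (0, 0) false 1 [1; 3] []);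
  (1%Z, Commute [(2, 10)] (0, 0) false 1 [1; 3] []);
  (1%Z, Commute [] (0, 0) false 1 [1; 3] [(2, 2)]);
  (1%Z, Commute [] (0, 0) false 1 [1; 3] [(2, 8)]);
  (1%Z, Commute [] (0, 0) false 1 [1; 3] [(2, 10)])].
Definition rep_commute_cert_3 : list (Z * basic_relation) := [
  ((-2)%Z, InsertLine [] [(1, 5)] false 0);
  (2%Z, InsertLine [(1, 5)] [] false 0);
  (1%Z, InsertLine [(0, 0)] [(1, 1)] false 6);
  ((-1)%Z, InsertLine [(0, 0); (1, 1)] [] false 0);
  ((-1)%Z, InsertLine [] [(0, 0); (1, 5)] false 6);
  (1%Z, InsertLine [(0, 0)] [(1, 5)] false 6);
  ((-1)%Z, InsertLine [(0, 0); (1, 5)] [] false 5);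
  ((-1)%Z, InsertLine [(0, 0); (1, 5)] [] false 6);
  (1%Z, InsertLine [(0, 0)] [(6, 6)] false 1);
  ((-2)%Z, InsertLine [(0, 1); (1, 5)] [] false 0);
  ((-1)%Z, InsertLine [(0, 2); (1, 1)] [] false 0);
  (1%Z, InsertLine [(0, 2); (1, 1)] [] false 5);
  ((-2)%Z, InsertLine [(0, 4); (1, 5)] [] false 0);
  ((-2)%Z, InsertLine [(0, 6); (1, 5)] [] false 0);
  ((-2)%Z, InsertLine [(0, 9); (1, 5)] [] false 0);
  ((-1)%Z, InsertLine [(0, 10)] [(1, 5)] false 6);
  ((-1)%Z, InsertLine [(0, 10); (1, 5)] [] false 6);
  (1%Z, InsertLine [] [(1, 1); (0, 0)] false 0);
  ((-1)%Z, InsertLine [(1, 1)] [(0, 0)] false 6);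
  (1%Z, InsertLine [] [(1, 1); (0, 2)] false 0);
  ((-1)%Z, InsertLine [(1, 1); (0, 2)] [] false 5);
  (1%Z, InsertLine [] [(1, 5); (0, 0)] false 6);
  (1%Z, InsertLine [(1, 5)] [(0, 0)] false 5);
  (2%Z, InsertLine [] [(1, 5); (0, 1)] false 0);
  (2%Z, InsertLine [] [(1, 5); (0, 4)] false 0);
  (2%Z, InsertLine [] [(1, 5); (0, 6)] false 0);
  (2%Z, InsertLine [] [(1, 5); (0, 9)] false 0);
  (1%Z, InsertLine [] [(1, 5); (0, 10)] false 6);
  (1%Z, InsertLine [(1, 5)] [(0, 10)] false 6);
  ((-1)%Z, InsertLine [(6, 6)] [(0, 0)] false 1);
  ((-1)%Z, Commute [(0, 5)] (0, 0) false 1 [1; 3] []);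
  ((-1)%Z, Commute [(0, 6)] (0, 0) false 1 [1; 3] []);
  ((-1)%Z, Commute [(0, 12)] (0, 0) false 1 [1; 3] []);
  ((-1)%Z, Commute [(0, 13)] (0, 0) false 1 [1; 3] []);
  ((-1)%Z, Commute [] (0, 0) false 1 [1; 3] [(0, 5)]);
  ((-1)%Z, Commute [] (0, 0) false 1 [1; 3] [(0, 6)]);
  ((-1)%Z, Commute [] (0, 0) false 1 [1; 3] [(0, 12)]);
  ((-1)%Z, Commute [] (0, 0) false 1 [1; 3] [(0, 13)]);
  ((-1)%Z, Commute [] (0, 0) false 1 [1; 3] [(5, 6)]);
  ((-1)%Z, Commute [] (0, 0) false 1 [1; 3] [(5, 13)]);
  (1%Z, Commute [] (0, 0) false 1 [1; 3] [(6, 5)]);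
  (2%Z, Commute [(0, 1)] (0, 0) false 1 [5; 15] []);
  (2%Z, Commute [(0, 4)] (0, 0) false 1 [5; 15] []);
  (2%Z, Commute [(0, 6)] (0, 0) false 1 [5; 15] []);
  (2%Z, Commute [(0, 9)] (0, 0) false 1 [5; 15] []);
  (2%Z, Commute [] (0, 0) false 1 [5; 15] [(0, 1)]);
  (2%Z, Commute [] (0, 0) false 1 [5; 15] [(0, 4)]);
  (2%Z, Commute [] (0, 0) false 1 [5; 15] [(0, 6)]);
  (2%Z, Commute [] (0, 0) false 1 [5; 15] [(0, 9)]);
  ((-1)%Z, Commute [] (0, 0) false 1 [5; 15] [(5, 6)]);
  ((-1)%Z, Commute [] (0, 0) false 1 [5; 15] [(5, 9)]);
  (1%Z, Commute [] (0, 0) false 1 [5; 15] [(6, 1)]);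
  ((-1)%Z, Commute [(1, 5)] (0, 0) false 5 [1; 3] []);
  ((-1)%Z, Commute [(1, 5)] (0, 0) false 5 [4; 12] []);
  (1%Z, Commute [(1, 1)] (0, 0) false 6 [6; 14] []);
  (1%Z, Commute [] (0, 0) false 6 [6; 14] [(1, 1)]);
  (1%Z, Commute [] (0, 0) false 6 [6; 14] [(1, 5)]);
  (1%Z, Commute [(1, 1)] (0, 0) false 6 [7; 13] []);
  (1%Z, Commute [] (0, 0) false 6 [7; 13] [(1, 5)]);
  ((-2)%Z, Commute [(0, 10)] (0, 1) false 1 [5; 13] []);
  ((-2)%Z, Commute [] (0, 1) false 1 [5; 13] [(0, 10)]);
  ((-1)%Z, Commute [(0, 5)] (0, 2) false 1 [1; 3] []);
  ((-1)%Z, Commute [(0, 6)] (0, 2) false 1 [1; 3] []);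
  ((-1)%Z, Commute [(0, 12)] (0, 2) false 1 [1; 3] []);
  ((-1)%Z, Commute [(0, 13)] (0, 2) false 1 [1; 3] []);
  ((-1)%Z, Commute [(6, 6)] (0, 2) false 1 [1; 3] []);
  ((-1)%Z, Commute [] (0, 2) false 1 [1; 3] [(0, 5)]);
  ((-1)%Z, Commute [] (0, 2) false 1 [1; 3] [(0, 6)]);
  ((-1)%Z, Commute [] (0, 2) false 1 [1; 3] [(0, 12)]);
  ((-1)%Z, Commute [] (0, 2) false 1 [1; 3] [(0, 13)]);
  (1%Z, Commute [] (0, 2) false 1 [1; 3] [(5, 5)]);
  (1%Z, Commute [] (0, 2) false 1 [1; 3] [(5, 12)]);
  ((-1)%Z, Commute [] (0, 2) false 1 [1; 3] [(6, 6)]);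
  ((-1)%Z, Commute [] (0, 2) false 1 [1; 3] [(6, 13)]);
  ((-1)%Z, Commute [(1, 1)] (0, 2) false 5 [1; 3] []);
  ((-2)%Z, Commute [(0, 10)] (0, 4) false 1 [5; 7] []);
  ((-2)%Z, Commute [] (0, 4) false 1 [5; 7] [(0, 10)]);
  ((-2)%Z, Commute [(0, 10)] (0, 6) false 1 [5; 7] []);
  ((-2)%Z, Commute [] (0, 6) false 1 [5; 7] [(0, 10)]);
  ((-2)%Z, Commute [(0, 10)] (0, 9) false 1 [5; 13] []);
  ((-2)%Z, Commute [] (0, 9) false 1 [5; 13] [(0, 10)]);
  ((-1)%Z, Commute [(6, 6)] (0, 10) false 1 [5; 15] []);
  (1%Z, Commute [] (0, 10) false 1 [5; 15] [(5, 1)]);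
  (1%Z, Commute [] (0, 10) false 1 [5; 15] [(5, 4)]);
  ((-1)%Z, Commute [] (0, 10) false 1 [5; 15] [(6, 6)]);
  ((-1)%Z, Commute [] (0, 10) false 1 [5; 15] [(6, 9)]);
  ((-1)%Z, Commute [(1, 5)] (0, 10) false 6 [1; 3] []);
  ((-1)%Z, Commute [] (0, 10) false 6 [1; 3] [(1, 5)]);
  ((-1)%Z, Commute [(1, 5)] (0, 10) false 6 [4; 12] []);
  ((-1)%Z, Commute [] (0, 10) false 6 [4; 12] [(1, 5)]);
  ((-1)%Z, Commute [(6, 6)] (1, 1) false 0 [0; 2] []);
  ((-1)%Z, Commute [(6, 14)] (1, 1) false 0 [0; 2] []);
  ((-1)%Z, Commute [] (1, 1) false 0 [0; 2] [(5, 0)]);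
  ((-1)%Z, Commute [] (1, 1) false 0 [0; 2] [(5, 2)]);
  ((-1)%Z, Commute [] (1, 1) false 0 [0; 2] [(5, 6)]);
  ((-1)%Z, Commute [] (1, 1) false 0 [0; 2] [(5, 7)]);
  ((-1)%Z, Commute [] (1, 1) false 0 [0; 2] [(5, 13)]);
  ((-1)%Z, Commute [] (1, 1) false 0 [0; 2] [(5, 14)]);
  ((-1)%Z, Commute [] (1, 1) false 0 [0; 2] [(6, 6)]);
  ((-1)%Z, Commute [] (1, 1) false 0 [0; 2] [(6, 7)]);
  ((-1)%Z, Commute [] (1, 1) false 0 [0; 2] [(6, 13)]);
  ((-1)%Z, Commute [] (1, 1) false 0 [0; 2] [(6, 14)]);
  ((-1)%Z, Commute [(0, 0)] (1, 1) false 5 [0; 2] []);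
  ((-1)%Z, Commute [(0, 0)] (1, 1) false 6 [5; 13] []);
  (1%Z, Commute [(6, 0)] (1, 5) false 0 [0; 10] []);
  (1%Z, Commute [(6, 1)] (1, 5) false 0 [0; 10] []);
  (1%Z, Commute [(6, 3)] (1, 5) false 0 [0; 10] []);
  (1%Z, Commute [(6, 4)] (1, 5) false 0 [0; 10] []);
  (1%Z, Commute [(6, 9)] (1, 5) false 0 [0; 10] []);
  (1%Z, Commute [(6, 10)] (1, 5) false 0 [0; 10] []);
  (1%Z, Commute [(6, 11)] (1, 5) false 0 [0; 10] []);
  (1%Z, Commute [(6, 12)] (1, 5) false 0 [0; 10] []);
  (1%Z, Commute [] (1, 5) false 0 [0; 10] [(5, 1)]);
  (1%Z, Commute [] (1, 5) false 0 [0; 10] [(5, 3)]);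
  (1%Z, Commute [] (1, 5) false 0 [0; 10] [(5, 4)]);
  (1%Z, Commute [] (1, 5) false 0 [0; 10] [(5, 12)]);
  (1%Z, Commute [] (1, 5) false 0 [0; 10] [(6, 0)]);
  (1%Z, Commute [] (1, 5) false 0 [0; 10] [(6, 1)]);
  (1%Z, Commute [] (1, 5) false 0 [0; 10] [(6, 3)]);
  (1%Z, Commute [] (1, 5) false 0 [0; 10] [(6, 4)]);
  (1%Z, Commute [] (1, 5) false 0 [0; 10] [(6, 10)]);
  (1%Z, Commute [] (1, 5) false 0 [0; 10] [(6, 12)]);
  ((-1)%Z, Commute [(0, 0)] (1, 5) false 5 [0; 10] []);
  ((-1)%Z, Commute [(0, 0)] (1, 5) false 6 [1; 9] [])].

Section ShrikhandeRepresentatives.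
Variables (A : CStarAlgebra) (u : ShV -> ShV -> A).
Hypothesis Hu : magic_unitary_for sh_vertices sh_adj A u.
Local Infix "*" := cmul.

Lemma orbital_mismatch_sound x y :
  orbital_mismatch x y = true -> sh_letter A u x * sh_letter A u y = cz.
Proof.
  unfold orbital_mismatch, letter_orbitals; intros H%negb_true_iff%Nat.eqb_neq.
  now apply (sh_orbital_mismatch_eq0 A u Hu).
Qed.

Lemma sh_orbital_rep_commute t :
  u sh_zero sh_zero * u (orbital_rep t) (orbital_rep t) =
  u (orbital_rep t) (orbital_rep t) * u sh_zero sh_zero.
Proof.
  assert (Hcert : forall k cert,
    check_cert orbital_mismatch (listed_sandwich orbital_mismatch 16 sandwich_data) 16
      (rep_commute_target k) cert = true ->
    u sh_zero sh_zero * u (sh_vertex k) (sh_vertex k) =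
    u (sh_vertex k) (sh_vertex k) * u sh_zero sh_zero).
  { intros k cert H.
    apply (check_cert_sound A 16 (sh_letter A u) (sh_letter_projection A u Hu)
             (sh_line_sum A u Hu) (sh_line_orth A u Hu) _ _ orbital_mismatch_sound
             (listed_sandwich_sound A 16 _ (sh_line_sum A u Hu) _ orbital_mismatch_sound _))
      in H.
    unfold rep_commute_target in H.
    rewrite !zpoly_eval_cons, zpoly_eval_nil, cadd_0r, zmul_1, zmul_m1 in H.
    apply cadd_opp_eq0 in H; unfold word_eval, fold_right, sh_letter in H.
    cbn [fst snd] in H; now rewrite !cmul_1r, sh_vertex_0 in H. }
  destruct t as [|[|[|t]]]; [reflexivity|apply (Hcert 1 rep_commute_cert_1)
    |apply (Hcert 2 rep_commute_cert_2)|apply (Hcert 6 rep_commute_cert_3)];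
    vm_compute; reflexivity.
Qed.

End ShrikhandeRepresentatives.

Theorem mainTheorem20 : no_quantum_symmetry sh_vertices sh_adj.
Proof.
  intros A u Hu i j k l.
  destruct (Nat.eq_dec (sh_orbital i k) (sh_orbital j l)) as [E|E].
  - destruct (sh_orbital_transitive i k) as (f & Hf & Hfi & Hfk).
    destruct (sh_orbital_transitive j l) as (g & Hg & Hgj & Hgl).
    pose proof (sh_orbital_rep_commute A _ (magic_unitary_comp _ _ _ _ _ Hu f g Hf Hg)
                  (sh_orbital i k)) as H.
    cbv beta in H; rewrite E in H at 2 4.
    now rewrite Hfi, Hgj, Hfk, Hgl in H.
  - rewrite (sh_orbital_mismatch_eq0 A u Hu i j k l E).
    rewrite (sh_orbital_mismatch_eq0 A u Hu k l i j)
      by now rewrite (sh_orbital_sym i k), (sh_orbital_sym j l).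
    reflexivity.
Qed.
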